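(* For every $u\in R$ and every $v\in Z(R)$, one has $u^\eta v^\eta=(uv)^\eta$.
   Context: Let $f\in\mathbb{C}[H]$ be a polynomial. $R=R(f)$ is the associative $\mathbb{C}$-algebra generated by $E,F,H$ with relations $EF-FE=f(H)$, $HE-EH=E$, $HF-FH=-F$; the monomials $F^iH^jE^k$ form a basis of $R$. $Z(R)$ is the center of $R$. Let $R(E)=\mathbb{C}[E]$ and $R(F,H)$ the subalgebra generated by $F,H$. Fix an algebra homomorphism $\eta:R(E)\to\mathbb{C}$ with $\eta(E)\neq0$ and let $R_\eta(E)=\ker\eta$. Then $R=R(F,H)\oplus R\,R_\eta(E)$ as vector spaces; for $u\in R$, $u^\eta$ denotes its $R(F,H)$-component. *)

From HB Require Import structures.
From mathcomp Require Import all_boot all_order all_algebra.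
From mathcomp Require Import reals.
From mathcomp.real_closed Require Import complex.
Set Implicit Arguments. Unset Strict Implicit. Unset Printing Implicit Defensive.
Import Order.TTheory GRing.Theory Num.Theory.
Local Open Scope ring_scope.

(* The base field C is modelled as R[i] for a real field R : realType,
   i.e. the complex numbers. *)

Section RfDefs.
Variable K : fieldType.
Variable A : algType K.

Definition polyAt (f : {poly K}) (x : A) : A := horner_alg x f.

Definition Rf_relations (f : {poly K}) (E F H : A) : Prop :=
  [/\ E * F - F * E = polyAt f H,
      H * E - E * H = E &
      H * F - F * H = - F].

Definition pbw (E F H : A) (m : nat * nat * nat) : A :=
  F ^+ m.1.1 * H ^+ m.1.2 * E ^+ m.2.

Definition pbw_basis (E F H : A) : Prop :=
  (forall u : A, exists (s : seq (nat * nat * nat)) (c : nat * nat * nat -> K),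
      u = \sum_(m <- s) c m *: pbw E F H m) /\
  (forall (s : seq (nat * nat * nat)) (c : nat * nat * nat -> K),
      uniq s -> \sum_(m <- s) c m *: pbw E F H m = 0 ->
      forall m, m \in s -> c m = 0).

Definition central (v : A) : Prop := forall w : A, v * w = w * v.

Inductive inSubalg2 (F H : A) : A -> Prop :=
  | sa_F : inSubalg2 F H F
  | sa_H : inSubalg2 F H H
  | sa_1 : inSubalg2 F H 1
  | sa_add x y : inSubalg2 F H x -> inSubalg2 F H y -> inSubalg2 F H (x + y)
  | sa_scale (c : K) x : inSubalg2 F H x -> inSubalg2 F H (c *: x)
  | sa_mul x y : inSubalg2 F H x -> inSubalg2 F H y -> inSubalg2 F H (x * y).

Definition inPolyE (E : A) (x : A) : Prop := exists p : {poly K}, x = polyAt p E.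

(* eta : R(E) -> K is a (unital) K-algebra homomorphism; eta is given as a
   function on A, only its restriction to R(E) matters. *)
Definition alg_hom_on_RE (E : A) (eta : A -> K) : Prop :=
  [/\ eta 1 = 1,
      (forall x y, inPolyE E x -> inPolyE E y -> eta (x + y) = eta x + eta y),
      (forall x y, inPolyE E x -> inPolyE E y -> eta (x * y) = eta x * eta y) &
      (forall (c : K) x, inPolyE E x -> eta (c *: x) = c * eta x)].

Definition inKerEta (E : A) (eta : A -> K) (x : A) : Prop :=
  inPolyE E x /\ eta x = 0.

Inductive inRKer (E : A) (eta : A -> K) : A -> Prop :=
  | rk_0 : inRKer E eta 0
  | rk_mul r x : inKerEta E eta x -> inRKer E eta (r * x)
  | rk_add x y : inRKer E eta x -> inRKer E eta y -> inRKer E eta (x + y)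
  | rk_scale (c : K) x : inRKer E eta x -> inRKer E eta (c *: x).

(* w = u^eta : w is the R(F,H)-component of u in R = R(F,H) (+) R R_eta(E) *)
Definition eta_component (E F H : A) (eta : A -> K) (u w : A) : Prop :=
  inSubalg2 F H w /\ inRKer E eta (u - w).

End RfDefs.

From HB Require Import structures.
From mathcomp Require Import all_boot all_order all_algebra.
From mathcomp Require Import reals.
From mathcomp.real_closed Require Import complex.
Import GRing.Theory.
Local Open Scope ring_scope.
Set Implicit Arguments. Unset Strict Implicit.

(* Write a := eta(E). The kernel of eta on C[E] consists of the multiples of
   E - a, so every element of R R_eta(E) is a right multiple of E - a. As v is
   central,
     (uv)^eta - u^eta v^eta = (u - u^eta) v + u^eta (v - v^eta) - (uv - (uv)^eta)
   is then of the form r (E - a); it also lies in R(F,H), which the relation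
   [H, F] = -F shows to be spanned by the monomials F^i H^j. Expanding
   r = sum c_ijk F^i H^j E^k in the PBW basis, the coefficient of
   F^i H^j E^(k+1) in r (E - a) is c_ijk - a c_ij(k+1), and it must vanish.
   Since c has finite support, c = 0, hence r (E - a) = 0. *)

Lemma eventually0_backward_recurrence (R : pzSemiRingType) (g : nat -> R) a n :
  (forall k, g k = a * g k.+1) -> (forall k, (n <= k)%N -> g k = 0) ->
  forall k, g k = 0.
Proof.
move=> rec g_large k.
have g_pow m : g k = a ^+ m * g (k + m)%N.
  by elim: m => [|m IH]; rewrite ?addn0 ?mul1r // IH rec addnS mulrA -exprSr.
by rewrite (g_pow n) g_large ?mulr0 ?leq_addl.
Qed.

Section FHSpan.
Variables (K : fieldType) (A : algType K) (F H : A).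

Inductive FH_span : A -> Prop :=
  | FH_span0 : FH_span 0
  | FH_spanD x y : FH_span x -> FH_span y -> FH_span (x + y)
  | FH_spanZ (c : K) x : FH_span x -> FH_span (c *: x)
  | FH_span_monomial i j : FH_span (F ^+ i * H ^+ j).

Lemma FH_spanB x y : FH_span x -> FH_span y -> FH_span (x - y).
Proof.
by move=> Sx Sy; rewrite -scaleN1r; apply: FH_spanD => //; apply: FH_spanZ.
Qed.

Lemma FH_span_mulH x : FH_span x -> FH_span (x * H).
Proof.
elim=> [|x1 y1 _ S1 _ S2|c x1 _ S1|i j].
- by rewrite mul0r; apply: FH_span0.
- by rewrite mulrDl; apply: FH_spanD.
- by rewrite -scalerAl; apply: FH_spanZ.
- by rewrite -mulrA -exprSr; apply: FH_span_monomial.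
Qed.

Lemma FH_span_mul_subHn x (k : nat) : FH_span x -> FH_span (x * (H - k%:R)).
Proof.
move=> Sx; rewrite mulrBr mulr_natr -scaler_nat.
by apply: FH_spanB; [apply: FH_span_mulH | apply: FH_spanZ].
Qed.

Hypothesis HF_comm : H * F - F * H = - F.

Lemma mulH_exprF k : H * F ^+ k = F ^+ k * (H - k%:R).
Proof.
have HF : H * F = F * (H - 1) by rewrite mulrBr mulr1 -HF_comm addrC subrK.
elim: k => [|k IH]; first by rewrite expr0 mul1r mulr1 subr0.
rewrite exprSr mulrA IH -!mulrA mulrBl HF -(commr_nat F k) -mulrBr.
by rewrite -addrA -opprD -mulrS.
Qed.

Lemma exprH_mul_exprF j k : H ^+ j * F ^+ k = F ^+ k * (H - k%:R) ^+ j.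
Proof.
elim: j => [|j IH]; first by rewrite !expr0 mul1r mulr1.
by rewrite exprSr -mulrA mulH_exprF mulrA IH -mulrA -exprSr.
Qed.

Lemma FH_span_mul_monomials i j k l : FH_span (F ^+ i * H ^+ j * (F ^+ k * H ^+ l)).
Proof.
rewrite mulrA -(mulrA _ (H ^+ j)) exprH_mul_exprF mulrA -exprD.
have S_subHn n : FH_span (F ^+ (i + k) * (H - k%:R) ^+ n).
  elim: n => [|n IH]; first by rewrite expr0 -(expr0 H); apply: FH_span_monomial.
  by rewrite exprSr mulrA; apply: FH_span_mul_subHn.
elim: l => [|l IH]; first by rewrite expr0 mulr1.
by rewrite exprSr mulrA; apply: FH_span_mulH.
Qed.

Lemma FH_spanM x y : FH_span x -> FH_span y -> FH_span (x * y).
Proof.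
move=> Sx Sy; elim: Sx => [|x1 y1 _ S1 _ S2|c x1 _ S1|i j].
- by rewrite mul0r; apply: FH_span0.
- by rewrite mulrDl; apply: FH_spanD.
- by rewrite -scalerAl; apply: FH_spanZ.
elim: Sy => [|x1 y1 _ S1 _ S2|c x1 _ S1|k l].
- by rewrite mulr0; apply: FH_span0.
- by rewrite mulrDr; apply: FH_spanD.
- by rewrite -scalerAr; apply: FH_spanZ.
exact: FH_span_mul_monomials.
Qed.

Lemma inSubalg2_FH_span w : inSubalg2 F H w -> FH_span w.
Proof.
elim=> {w}.
- by have := FH_span_monomial 1 0; rewrite expr0 mulr1 expr1.
- by have := FH_span_monomial 0 1; rewrite expr0 mul1r expr1.
- by have := FH_span_monomial 0 0; rewrite !expr0 mulr1.
- by move=> x y _ Sx _ Sy; apply: FH_spanD.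
- by move=> c x _ Sx; apply: FH_spanZ.
- by move=> x y _ Sx _ Sy; apply: FH_spanM.
Qed.

End FHSpan.

Section PBWCoordinates.
Variables (K : fieldType) (A : algType K) (E F H : A).

Local Notation monomial := (nat * nat * nat)%type.

(* Elements are encoded as lists of (monomial, coefficient) pairs in which a
   monomial may occur several times; [pbw_coef] adds up its coefficients. *)
Definition pbw_sum (l : seq (monomial * K)) : A :=
  \sum_(p <- l) p.2 *: pbw E F H p.1.

Definition pbw_coef (l : seq (monomial * K)) (m : monomial) : K :=
  \sum_(p <- l | p.1 == m) p.2.

Lemma pbw_sum_cat l1 l2 : pbw_sum (l1 ++ l2) = pbw_sum l1 + pbw_sum l2.
Proof. by rewrite /pbw_sum big_cat. Qed.

Lemma pbw_coef_cat l1 l2 m : pbw_coef (l1 ++ l2) m = pbw_coef l1 m + pbw_coef l2 m.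
Proof. by rewrite /pbw_coef big_cat. Qed.

Lemma pbw_coef_notin l m : m \notin map fst l -> pbw_coef l m = 0.
Proof.
move=> m_l; rewrite /pbw_coef big1_seq // => p /andP[/eqP p_m pl].
by move: m_l; rewrite -p_m map_f.
Qed.

Lemma pbw_sum_coef l (s : seq monomial) : uniq s -> {subset map fst l <= s} ->
  pbw_sum l = \sum_(m <- s) pbw_coef l m *: pbw E F H m.
Proof.
move=> s_uniq l_s.
under eq_bigr => m _ do rewrite /pbw_coef scaler_suml big_mkcond /=.
rewrite exchange_big /pbw_sum big_seq [RHS]big_seq; apply: eq_bigr => p pl.
have p_s : p.1 \in s by apply/l_s/map_f.
rewrite (big_rem p.1) //= eqxx big1_seq ?addr0 // => m /andP[_ m_s].
by case: eqP => // p_m; move: m_s; rewrite -p_m mem_rem_uniqF.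
Qed.

Lemma pbw_sum_eq0 l : (forall m, pbw_coef l m = 0) -> pbw_sum l = 0.
Proof.
move=> l0; rewrite (@pbw_sum_coef l (undup (map fst l))) ?undup_uniq //.
  by rewrite big1 // => m _; rewrite l0 scale0r.
by move=> m; rewrite mem_undup.
Qed.

Lemma pbw_coef_eventually0 l :
  exists n, forall i j k, (n <= k)%N -> pbw_coef l (i, j, k) = 0.
Proof.
exists (\max_(p <- l) p.1.2).+1 => i j k n_k.
rewrite /pbw_coef big1_seq // => p /andP[/eqP p_m pl].
have := @leq_bigmax_seq _ l xpredT (fun p => p.1.2) p pl isT.
by rewrite p_m /= => /(leq_trans n_k); rewrite ltnn.
Qed.

Definition mulE_term (p : monomial * K) : monomial * K :=
  ((p.1.1.1, p.1.1.2, p.1.2.+1), p.2).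

Definition scale_term (c : K) (p : monomial * K) : monomial * K := (p.1, c * p.2).

Definition mul_subE (a : K) (l : seq (monomial * K)) : seq (monomial * K) :=
  map mulE_term l ++ map (scale_term (- a)) l.

Lemma pbw_sum_mul_subE a l : pbw_sum (mul_subE a l) = pbw_sum l * (E - a%:A).
Proof.
rewrite pbw_sum_cat mulrBr mulr_algr /pbw_sum !big_map mulr_suml scaler_sumr.
rewrite -sumrN -!big_split; apply: eq_bigr => p _ /=.
by rewrite /pbw /= exprSr !mulrA scalerAl scalerA mulNr scaleNr.
Qed.

Lemma pbw_coef_mul_subE a l i j k :
  pbw_coef (mul_subE a l) (i, j, k) =
  (if k is k'.+1 then pbw_coef l (i, j, k') else 0) - a * pbw_coef l (i, j, k).
Proof.
rewrite pbw_coef_cat /pbw_coef !big_map mulr_sumr -sumrN; congr (_ + _).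
  case: k => [|k].
    by rewrite big1 // => -[[[i' j'] k'] c]; rewrite /= !xpair_eqE andbF.
  by apply: eq_bigl => -[[[i' j'] k'] c]; rewrite /= !xpair_eqE eqSS.
by apply: eq_bigr => p _; rewrite /= mulNr.
Qed.

Lemma FH_span_pbw_sum x : FH_span F H x ->
  exists2 l, all (fun p : monomial * K => p.1.2 == 0%N) l & x = pbw_sum l.
Proof.
elim=> [|x1 y1 _ [l1 l1_0 ->] _ [l2 l2_0 ->]|c x1 _ [l1 l1_0 ->]|i j].
- by exists [::] => //; rewrite /pbw_sum big_nil.
- by exists (l1 ++ l2); [rewrite all_cat l1_0 | rewrite pbw_sum_cat].
- exists (map (scale_term c) l1); first by rewrite all_map.
  rewrite /pbw_sum big_map scaler_sumr; apply: eq_bigr => p _.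
  by rewrite scalerA.
- exists [:: ((i, j, 0%N), 1)] => //.
  by rewrite /pbw_sum big_seq1 scale1r /pbw /= expr0 mulr1.
Qed.

Hypothesis basis_pbw : pbw_basis E F H.

Lemma pbw_coef_inj l l' : pbw_sum l = pbw_sum l' -> pbw_coef l =1 pbw_coef l'.
Proof.
move=> l_l' m; set s := undup (map fst (l ++ l')).
have s_uniq : uniq s by apply: undup_uniq.
have l_s : {subset map fst l <= s}.
  by move=> x xl; rewrite mem_undup map_cat mem_cat xl.
have l'_s : {subset map fst l' <= s}.
  by move=> x xl; rewrite mem_undup map_cat mem_cat xl orbT.
have diff0 : \sum_(x <- s) (pbw_coef l x - pbw_coef l' x) *: pbw E F H x = 0.
  under eq_bigr => x _ do rewrite scalerBl.
  by rewrite sumrB -!pbw_sum_coef // l_l' subrr.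
have [m_s | m_s] := boolP (m \in s).
  exact/subr0_eq/(basis_pbw.2 _ _ s_uniq diff0).
by rewrite !pbw_coef_notin //; apply: contra m_s; [apply: l'_s | apply: l_s].
Qed.

Lemma FH_span_mul_subE_eq0 a r w : FH_span F H w -> w = r * (E - a%:A) -> w = 0.
Proof.
move=> /FH_span_pbw_sum[lw lw_E0 ->].
have [s [c ->]] := basis_pbw.1 r.
set l := [seq (m, c m) | m <- s].
have -> : \sum_(m <- s) c m *: pbw E F H m = pbw_sum l by rewrite /pbw_sum big_map.
rewrite -pbw_sum_mul_subE => /pbw_coef_inj coef.
have lwS i j k : pbw_coef lw (i, j, k.+1) = 0.
  apply: pbw_coef_notin; apply/mapP => -[p pl p_m].
  by move/allP: lw_E0 => /(_ p pl); rewrite -p_m.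
have l0 i j : forall k, pbw_coef l (i, j, k) = 0.
  have [n l_large] := pbw_coef_eventually0 l.
  apply: (@eventually0_backward_recurrence _ _ a n) => [k|k /l_large //].
  by have := coef (i, j, k.+1); rewrite lwS pbw_coef_mul_subE => /esym/subr0_eq.
apply: pbw_sum_eq0 => -[[i j] k].
by rewrite coef pbw_coef_mul_subE !l0 mulr0 subr0; case: k.
Qed.

End PBWCoordinates.

Section PolyAt.
Variables (K : fieldType) (A : algType K) (x : A).

Lemma polyAtD p q : polyAt (p + q) x = polyAt p x + polyAt q x.
Proof. exact: rmorphD. Qed.

Lemma polyAtB p q : polyAt (p - q) x = polyAt p x - polyAt q x.
Proof. exact: rmorphB. Qed.

Lemma polyAtM p q : polyAt (p * q) x = polyAt p x * polyAt q x.
Proof. exact: rmorphM. Qed.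

Lemma polyAtC c : polyAt c%:P x = c%:A.
Proof. exact: horner_algC. Qed.

Lemma polyAtX : polyAt 'X x = x.
Proof. exact: horner_algX. Qed.

End PolyAt.

Section EtaKernel.
Variables (K : fieldType) (A : algType K) (E : A) (eta : A -> K).
Hypothesis eta_hom : alg_hom_on_RE E eta.

Lemma eta_polyAt p : eta (polyAt p E) = p.[eta E].
Proof.
case: eta_hom => eta1 etaD etaM etaZ.
have polyAtE q : inPolyE E (polyAt q E) by exists q.
have etaC c : eta (polyAt c%:P E) = c.
  by rewrite polyAtC etaZ ?eta1 ?mulr1 //; exists 1%:P; rewrite polyAtC scale1r.
elim/poly_ind: p => [|p c IH]; first by rewrite -[0]/(0%:P) etaC horner0.
by rewrite polyAtD etaD // polyAtM etaM // etaC polyAtX IH !hornerE.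
Qed.

Lemma inKerEta_factor x : inKerEta E eta x -> exists r, x = r * (E - (eta E)%:A).
Proof.
case=> -[p ->]; rewrite eta_polyAt => /eqP/factor_theorem[q ->].
by exists (polyAt q E); rewrite polyAtM polyAtB polyAtX polyAtC.
Qed.

Lemma inRKer_factor x : inRKer E eta x -> exists r, x = r * (E - (eta E)%:A).
Proof.
elim=> {x} [|r x /inKerEta_factor[q ->]|x y _ [r ->] _ [r' ->]|c x _ [r ->]].
- by exists 0; rewrite mul0r.
- by exists (r * q); rewrite mulrA.
- by exists (r + r'); rewrite mulrDl.
- by exists (c *: r); rewrite scalerAl.
Qed.

End EtaKernel.

Theorem mainTheorem16 (R : realType) (A : algType R[i]) (f : {poly R[i]})
  (E F H : A) (eta : A -> R[i])
  (hrel : Rf_relations f E F H) (hbasis : pbw_basis E F H)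
  (heta : alg_hom_on_RE E eta) (hetaE : eta E != 0)
  (u v ue ve uve : A) (hv : central v)
  (hue : eta_component E F H eta u ue)
  (hve : eta_component E F H eta v ve)
  (huve : eta_component E F H eta (u * v) uve) :
  ue * ve = uve.
Proof.
case: hrel => _ _ HF_comm.
case: hue => ue_FH /(inRKer_factor heta)[r1 u_ue].
case: hve => ve_FH /(inRKer_factor heta)[r2 v_ve].
case: huve => uve_FH /(inRKer_factor heta)[r3 uv_uve].
have w_FH : inSubalg2 F H (uve - ue * ve).
  by rewrite -scaleN1r; apply: sa_add => //; apply/sa_scale/sa_mul.
have w_split : uve - ue * ve = (u - ue) * v + ue * (v - ve) - (u * v - uve).
  by rewrite mulrBl mulrBr addrA subrK opprB [RHS]addrC addrA subrK.
have w_mul : uve - ue * ve = (r1 * v + ue * r2 - r3) * (E - (eta E)%:A).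
  rewrite w_split u_ue v_ve uv_uve -(mulrA r1) -(hv (E - _)).
  by rewrite mulrA (mulrA ue) -mulrDl -mulrBl.
apply/esym/subr0_eq.
exact: (FH_span_mul_subE_eq0 hbasis (inSubalg2_FH_span HF_comm w_FH) w_mul).
Qed.
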